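(* Let $X$ be a real Hilbert space and $I$ either $[0,T]$ ($T>0$) or $[0,+\infty)$. Assume: $K\subset X$ is a nonempty closed convex cone; $A:X\to X$ satisfies $(Au-Av,u-v)_X\ge m_A\|u-v\|_X^2$ and $\|Au-Av\|_X\le L_A\|u-v\|_X$ for all $u,v\in X$, with $m_A,L_A>0$; $f\in C(I;X)$; $\mathcal{S}:C(I;X)\to C(I;X)$ is a history-dependent operator; $j:K\to\mathbb{R}$ is a convex, positively homogeneous, Lipschitz continuous function. Then there exists a unique function $u\in C(I;K)$ such that $$-u(t)\in \mathrm{N}_{C(t)}\big(Au(t)+\mathcal{S}u(t)\big)\quad\forall\,t\in I.$$
   Context: $\mathcal{S}$ is history-dependent if for every compact $\mathcal J\subset I$ there is $L_{\mathcal J}>0$ with $\|\mathcal{S}u_1(t)-\mathcal{S}u_2(t)\|_X\le L_{\mathcal J}\int_0^t\|u_1(s)-u_2(s)\|_X ds$ for all $u_1,u_2\in C(I;X)$, $t\in\mathcal J$. Define $J:X\to(-\infty,+\infty]$ by $J(v)=j(v)$ if $v\in K$, $J(v)=+\infty$ otherwise; $C=\{\xi\in X:J(v)\ge(\xi,v)_X\ \forall v\in X\}$ and $C(t)=f(t)-C$ for $t\in I$. For a nonempty closed convex $D\subset X$, $\mathrm{N}_D(x)=\{\xi:(\xi,w-x)_X\le0\ \forall w\in D\}$ if $x\in D$, $\emptyset$ otherwise. *)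

From Stdlib Require Import Reals Rtopology ClassicalEpsilon.
From Coquelicot Require Import Coquelicot.
Open Scope R_scope.

Section Defs.
Context {X : CompleteNormedModule R_AbsRing}.

(* ip is an inner product on X inducing the norm of X; X being complete,
   (X, ip) is a real Hilbert space. *)
Definition is_inner_product (ip : X -> X -> R) : Prop :=
  (forall x y, ip x y = ip y x) /\
  (forall x y z, ip (plus x y) z = ip x z + ip y z) /\
  (forall (a : R) x y, ip (scal a x) y = a * ip x y) /\
  (forall x, 0 <= ip x x) /\
  (forall x, norm x = sqrt (ip x x)).

(* The time interval I = [0,T] (T real, T > 0) or [0,+oo) (T = p_infty). *)
Definition time_interval (T : Rbar) (t : R) : Prop := 0 <= t /\ Rbar_le t T.

Definition cont_on (I : R -> Prop) (u : R -> X) : Prop :=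
  forall t, I t -> filterlim u (within I (locally t)) (locally (u t)).

Definition history_dependent (I : R -> Prop) (S : (R -> X) -> (R -> X)) : Prop :=
  forall J : R -> Prop, (forall t, J t -> I t) -> Rtopology.compact J ->
  exists L : R, 0 < L /\
    forall u1 u2, cont_on I u1 -> cont_on I u2 ->
    forall t, J t ->
      norm (minus (S u1 t) (S u2 t)) <= L * RInt (fun s => norm (minus (u1 s) (u2 s))) 0 t.

Definition closed_convex_cone (K : X -> Prop) : Prop :=
  (exists x, K x) /\ closed K /\
  (forall u v (l : R), K u -> K v -> 0 <= l <= 1 -> K (plus (scal l u) (scal (1 - l) v))) /\
  (forall u (l : R), K u -> 0 <= l -> K (scal l u)).

Definition j_hyp (K : X -> Prop) (j : X -> R) : Prop :=
  (forall u v (l : R), K u -> K v -> 0 <= l <= 1 ->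
     j (plus (scal l u) (scal (1 - l) v)) <= l * j u + (1 - l) * j v) /\
  (forall u (l : R), K u -> 0 < l -> j (scal l u) = l * j u) /\
  (exists Lj : R, 0 <= Lj /\ forall u v, K u -> K v -> Rabs (j u - j v) <= Lj * norm (minus u v)).

Definition Jext (K : X -> Prop) (j : X -> R) (v : X) : Rbar :=
  if excluded_middle_informative (K v) then Finite (j v) else p_infty.

Definition Cset (ip : X -> X -> R) (K : X -> Prop) (j : X -> R) (xi : X) : Prop :=
  forall v, Rbar_le (Finite (ip xi v)) (Jext K j v).

Definition Ct (ip : X -> X -> R) (K : X -> Prop) (j : X -> R) (f : R -> X) (t : R) (xi : X) : Prop :=
  exists c, Cset ip K j c /\ xi = minus (f t) c.

Definition normal_cone (ip : X -> X -> R) (D : X -> Prop) (x xi : X) : Prop :=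
  D x /\ forall w, D w -> ip xi (minus w x) <= 0.

End Defs.

(* At a fixed time the problem reads: find u in K with -u in N_{f0 - C}(A u + eta).
   Because K is a cone and j is positively homogeneous, this is equivalent to the
   variational inequality (A u - (f0 - eta), v - u) + j v - j u >= 0 for all v in K,
   which Banach's fixed point theorem solves through the proximal map of rho j; its
   solution is (1/mA)-Lipschitz in (f0, eta). Hence u |-> (t |-> solution for the
   data (f t, S u t)) is again history-dependent, and a history-dependent operator
   has a unique fixed point in C(I; X): on every [0, b] in I the n-th Picard
   increment is bounded by C 2^-n, because the weight exp ((2 L + 1) s) turns the
   integral operator into a contraction, and the same estimate (a Gronwall
   argument) gives uniqueness. *)

From Stdlib Require Import Reals Rtopology Lra Lia ClassicalEpsilon ssreflect.
From Coquelicot Require Import Coquelicot.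
Open Scope R_scope.

Lemma geometric_small (M q eps : R) : 0 <= M -> 0 <= q < 1 -> 0 < eps ->
  exists N, forall n, (N <= n)%nat -> M * q ^ n < eps.
Proof.
  move=> HM Hq He.
  have [N HN] := pow_lt_1_zero q ltac:(rewrite Rabs_right; lra) (eps / (M + 1))
    ltac:(apply: Rdiv_lt_0_compat; lra).
  exists N => n Hn. have := HN n Hn. rewrite Rabs_right; last by apply/Rle_ge/pow_le; lra.
  move=> Hqn. have Hqn0 := pow_le q n (proj1 Hq).
  have : q ^ n * (M + 1) < eps.
  { have -> : eps = eps / (M + 1) * (M + 1) by field; lra.
    apply: Rmult_lt_compat_r; lra. }
  nra.
Qed.

Lemma sqr_le_sqr_nonneg (a b : R) : 0 <= a -> 0 <= b -> a * a <= b * b -> a <= b.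
Proof. move=> *. case: (Rle_lt_dec a b); nra. Qed.

Lemma first_variation_nonneg (E D : R) : 0 <= D ->
  (forall l, 0 < l <= 1 -> 0 <= l * E + l * l * D) -> 0 <= E.
Proof.
  move=> HD H. case: (Rle_lt_dec 0 E) => // HE.
  set l := Rmin 1 (- E / (2 * (D + 1))).
  have Hl1 : l <= 1 by apply: Rmin_l.
  have Hl2 : l <= - E / (2 * (D + 1)) by apply: Rmin_r.
  have Hl0 : 0 < l.
  { rewrite /l /Rmin. case: Rle_dec => _; first lra. apply: Rdiv_lt_0_compat; lra. }
  have := H l ltac:(lra).
  have : l * D <= - E / (2 * (D + 1)) * D by apply: Rmult_le_compat_r.
  have : - E / (2 * (D + 1)) * D < - E / 2.
  { apply: (Rmult_lt_reg_r (2 * (D + 1))); first lra.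
    have -> : - E / (2 * (D + 1)) * D * (2 * (D + 1)) = - E * D by field; lra.
    lra. }
  nra.
Qed.

Lemma exists_inf {T : Type} (K : T -> Prop) (F : T -> R) :
  (exists x, K x) -> (exists B, forall w, K w -> B <= F w) ->
  exists m, (forall w, K w -> m <= F w) /\
    forall eps, 0 < eps -> exists w, K w /\ F w < m + eps.
Proof.
  move=> [x Kx] [B HB].
  set E := fun y => exists w, K w /\ y = - F w.
  have HE : bound E by exists (- B) => _ [w [Kw ->]]; have := HB w Kw; lra.
  have [L [HLu HLl]] := completeness E HE (ex_intro _ (- F x) (ex_intro _ x (conj Kx eq_refl))).
  exists (- L). split.
  - move=> w Kw. have : - F w <= L by apply: HLu; exists w. lra.
  - move=> eps He. case: (excluded_middle_informative (exists w, K w /\ F w < - L + eps)) => // Hn.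
    have : L <= L - eps; last lra.
    apply: HLl => _ [w [Kw ->]].
    case: (Rlt_le_dec (F w) (- L + eps)) => HFw; last lra.
    by case: Hn; exists w.
Qed.

Definition cont_seg (b : R) (h : R -> R) : Prop :=
  forall t, 0 <= t <= b -> forall eps, 0 < eps -> exists del, 0 < del /\
    forall s, 0 <= s <= b -> Rabs (s - t) < del -> Rabs (h s - h t) < eps.

(* Clamping extends a function continuous on [0, b] to a function continuous on R,
   to which Stdlib's results on continuous functions apply. *)
Definition clamp (b s : R) : R := Rmax 0 (Rmin s b).

Lemma clamp_in b s : 0 <= b -> 0 <= clamp b s <= b.
Proof. rewrite /clamp /Rmax /Rmin => ?; repeat destruct Rle_dec; lra. Qed.

Lemma clamp_id b s : 0 <= s <= b -> clamp b s = s.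
Proof. rewrite /clamp /Rmax /Rmin => ?; repeat destruct Rle_dec; lra. Qed.

Lemma clamp_lipschitz b s t : 0 <= b -> Rabs (clamp b s - clamp b t) <= Rabs (s - t).
Proof. rewrite /clamp /Rmax /Rmin => ?; repeat destruct Rle_dec; split_Rabs; lra. Qed.

Lemma cont_seg_clamp b h x : 0 <= b -> cont_seg b h -> continuity_pt (fun s => h (clamp b s)) x.
Proof.
  move=> Hb Hc. apply/continuity_pt_locally => eps.
  have [del [Hd Hdel]] := Hc (clamp b x) (clamp_in b x Hb) eps (cond_pos eps).
  exists (mkposreal _ Hd) => y Hy. apply: Hdel; first exact: clamp_in.
  apply: Rle_lt_trans (clamp_lipschitz b y x Hb) _. exact: Hy.
Qed.

Lemma cont_seg_bounded b h : 0 <= b -> cont_seg b h ->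
  exists M, 0 <= M /\ forall s, 0 <= s <= b -> h s <= M.
Proof.
  move=> Hb Hc.
  have [Mx [HM _]] := continuity_ab_maj (fun s => h (clamp b s)) 0 b Hb
    (fun c _ => cont_seg_clamp b h c Hb Hc).
  exists (Rmax 0 (h (clamp b Mx))). split; first exact: Rmax_l.
  move=> s Hs. have := HM s Hs. rewrite clamp_id //. have := Rmax_r 0 (h (clamp b Mx)). lra.
Qed.

Lemma cont_seg_ex_RInt b h : 0 <= b -> cont_seg b h -> forall s, 0 <= s <= b -> ex_RInt h 0 s.
Proof.
  move=> Hb Hc s Hs. apply: (ex_RInt_ext (fun s => h (clamp b s))).
  { rewrite Rmin_left ?Rmax_right; try lra. move=> x Hx. rewrite clamp_id //; lra. }
  apply: (@ex_RInt_continuous R_CompleteNormedModule) => z _.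
  apply/continuity_pt_filterlim. exact: cont_seg_clamp.
Qed.

Lemma is_RInt_scal_exp (K be s : R) : 0 < be ->
  is_RInt (fun r => K * exp (be * r)) 0 s (K * (exp (be * s) - 1) / be).
Proof.
  move=> Hbe.
  have -> : K * (exp (be * s) - 1) / be = minus (K * exp (be * s) / be) (K * exp (be * 0) / be).
  { rewrite /minus /plus /opp /= Rmult_0_r exp_0. field. lra. }
  apply: (is_RInt_derive (fun r => K * exp (be * r) / be)) => x _.
  - auto_derive; first done. field. lra.
  - apply: ex_derive_continuous. auto_derive. done.
Qed.

(* The weight [exp ((2 c + 1) s)] absorbs one integration at the price of a factor
   [c / (2 c + 1) <= 1/2]. *)
Lemma iterated_integral_bound (d : nat -> R -> R) b c M : 0 <= c -> 0 <= M ->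
  (forall n s, 0 <= s <= b -> ex_RInt (d n) 0 s) ->
  (forall s, 0 <= s <= b -> d O s <= M) ->
  (forall n s, 0 <= s <= b -> d (S n) s <= c * RInt (d n) 0 s) ->
  forall n s, 0 <= s <= b -> d n s <= M * exp ((2 * c + 1) * s) * (/ 2) ^ n.
Proof.
  move=> Hc HM Hint H0 HS n. set be := 2 * c + 1.
  have Hbe : 0 < be by rewrite /be; lra.
  have Hexp : forall s, 0 <= s -> 1 <= exp (be * s).
  { move=> s Hs. have := exp_ineq1_le (be * s). have : 0 <= be * s by nra. lra. }
  elim: n => [|n IH] s Hs.
  { have := H0 s Hs. have := Hexp s (proj1 Hs). simpl. nra. }
  set K := M * (/ 2) ^ n.
  have HK : 0 <= K by apply: Rmult_le_pos => //; apply: pow_le; lra.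
  have Hle : RInt (d n) 0 s <= K * (exp (be * s) - 1) / be.
  { rewrite -(is_RInt_unique _ _ _ _ (is_RInt_scal_exp K be s Hbe)).
    apply: RInt_le; first lra.
    - exact: Hint.
    - eexists. exact: is_RInt_scal_exp.
    - move=> x Hx. have := IH x ltac:(lra). rewrite /K. lra. }
  have HE := Hexp s (proj1 Hs). set E := exp (be * s) in Hle HE *.
  apply: Rle_trans (HS n s Hs) _.
  have -> : M * E * (/ 2) ^ S n = K * E / 2 by rewrite /K /=; field.
  have Hr : c * (K * (E - 1) / be) <= K * E / 2.
  { apply: (Rmult_le_reg_r be) => //.
    have -> : c * (K * (E - 1) / be) * be = c * K * (E - 1) by field; lra.
    rewrite /be. nra. }
  have := Rmult_le_compat_l c _ _ Hc Hle. lra.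
Qed.

Lemma gronwall_zero (w : R -> R) b c : 0 <= b -> 0 <= c -> cont_seg b w ->
  (forall s, 0 <= s <= b -> w s <= c * RInt w 0 s) ->
  forall s, 0 <= s <= b -> w s <= 0.
Proof.
  move=> Hb Hc Hw Hint s Hs.
  have [M [HM HMb]] := cont_seg_bounded b w Hb Hw.
  have Hit := iterated_integral_bound (fun _ => w) b c M Hc HM
    (fun _ => cont_seg_ex_RInt b w Hb Hw) HMb (fun _ => Hint).
  apply: Rle_plus_epsilon => eps He.
  set E := M * exp ((2 * c + 1) * s).
  have HE : 0 <= E by have := exp_pos ((2 * c + 1) * s); rewrite /E; nra.
  have [N HN] := geometric_small E (/ 2) eps HE ltac:(lra) He.
  have := Hit N s Hs. have := HN N (le_n _). rewrite /E. lra.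
Qed.

Section NormedModule.
Context {X : CompleteNormedModule R_AbsRing}.

Lemma norm_minus_sym (a b : X) : norm (minus a b) = norm (minus b a).
Proof. by rewrite -opp_minus norm_opp. Qed.

Lemma norm_minus_triangle (a b c : X) : norm (minus a c) <= norm (minus a b) + norm (minus b c).
Proof. rewrite (minus_trans b). exact: norm_triangle. Qed.

Lemma norm_minus_minus (a b c d : X) :
  norm (minus (minus a b) (minus c d)) <= norm (minus a c) + norm (minus b d).
Proof.
  have -> : minus (minus a b) (minus c d) = plus (minus a c) (opp (minus b d)).
  { rewrite /minus !opp_plus !opp_opp !plus_assoc.
    by rewrite -(plus_assoc a (opp b)) (plus_comm (opp b)) plus_assoc. }
  rewrite -(norm_opp (minus b d)). exact: norm_triangle.
Qed.

Lemma cont_on_eps (I : R -> Prop) (u : R -> X) : cont_on I u <->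
  forall t, I t -> forall eps, 0 < eps -> exists del, 0 < del /\
    forall s, I s -> Rabs (s - t) < del -> norm (minus (u s) (u t)) < eps.
Proof.
  split.
  - move=> H t It eps He.
    have [del Hdel] := proj1 (filterlim_locally_ball_norm _ _) (H t It) (mkposreal _ He).
    exists del. split; first exact: cond_pos. move=> s Is Hs. exact: Hdel s Hs Is.
  - move=> H t It. apply/filterlim_locally_ball_norm => eps.
    have [del [Hd Hdel]] := H t It eps (cond_pos eps).
    exists (mkposreal _ Hd) => s Hs Is. exact: Hdel.
Qed.

Lemma cont_seg_norm_minus (I : R -> Prop) (u v : R -> X) b : cont_on I u -> cont_on I v ->
  (forall s, 0 <= s <= b -> I s) -> cont_seg b (fun s => norm (minus (u s) (v s))).
Proof.
  move=> /cont_on_eps Hu /cont_on_eps Hv Hb t Ht eps He.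
  have [d1 [Hd1 H1]] := Hu t (Hb t Ht) (eps / 2) ltac:(lra).
  have [d2 [Hd2 H2]] := Hv t (Hb t Ht) (eps / 2) ltac:(lra).
  exists (Rmin d1 d2). split; first exact: Rmin_glb_lt.
  move=> s Hs Hst. have := Rmin_l d1 d2. have := Rmin_r d1 d2. move=> *.
  have := H1 s (Hb s Hs) ltac:(lra). have := H2 s (Hb s Hs) ltac:(lra).
  have : Rabs (norm (minus (u s) (v s)) - norm (minus (u t) (v t)))
    <= norm (minus (minus (u s) (v s)) (minus (u t) (v t))) := norm_triangle_inv _ _.
  have := norm_minus_minus (u s) (v s) (u t) (v t). move=> *. lra.
Qed.

Lemma cauchy_seq_lim (z : nat -> X) :
  (forall eps, 0 < eps -> exists N, forall n, (N <= n)%nat -> norm (minus (z n) (z N)) < eps) ->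
  filterlim z eventually (locally (lim (filtermap z eventually))).
Proof.
  move=> Hz. set F := filtermap z eventually.
  have FP : ProperFilter F := filtermap_proper_filter _ _ z _ eventually_filter.
  have Fc : cauchy F.
  { move=> eps. have [N HN] := Hz eps (cond_pos eps).
    exists (z N), N => n Hn. apply: norm_compat1. exact: HN. }
  move=> P [eps HP]. apply: filter_imp (complete_cauchy F FP Fc eps) => x. exact: HP.
Qed.

Section Geometric.
Variables (z : nat -> X) (M q : R).
Hypothesis (Hq : 0 <= q < 1).
Hypothesis (Hz : forall n, norm (minus (z (S n)) (z n)) <= M * q ^ n).

Lemma geometric_tail n m : (n <= m)%nat -> norm (minus (z m) (z n)) <= M * q ^ n / (1 - q).
Proof.
  have HM : 0 <= M.
  { have := Hz O. have := norm_ge_0 (minus (z 1%nat) (z 0%nat)). simpl. lra. }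
  have Hpart : forall k, norm (minus (z (n + k)%nat) (z n)) <= M * q ^ n * (1 - q ^ k) / (1 - q).
  { elim=> [|k IH].
    - rewrite Nat.add_0_r minus_eq_zero norm_zero /=.
      have -> : M * q ^ n * (1 - 1) / (1 - q) = 0 by field; lra. lra.
    - apply: Rle_trans (norm_minus_triangle _ (z (n + k)%nat) _) _.
      rewrite Nat.add_succ_r.
      have H1 := Hz (n + k)%nat. rewrite pow_add in H1.
      have -> : M * q ^ n * (1 - q ^ S k) / (1 - q)
        = M * (q ^ n * q ^ k) + M * q ^ n * (1 - q ^ k) / (1 - q) by simpl; field; lra.
      lra. }
  move=> Hnm. have -> : m = (n + (m - n))%nat by lia.
  apply: Rle_trans (Hpart _) _.
  have Hk := pow_le q (m - n) (proj1 Hq).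
  have Hn := Rmult_le_pos _ _ HM (pow_le q n (proj1 Hq)).
  apply: Rmult_le_compat_r; first by apply/Rlt_le/Rinv_0_lt_compat; lra.
  nra.
Qed.

Lemma geometric_seq_lim : filterlim z eventually (locally (lim (filtermap z eventually))).
Proof.
  apply: cauchy_seq_lim => eps He.
  have HM : 0 <= M / (1 - q).
  { have := Hz O. have := norm_ge_0 (minus (z 1%nat) (z 0%nat)). simpl.
    move=> *. apply: Rdiv_le_0_compat; lra. }
  have [N HN] := geometric_small _ q eps HM Hq He.
  exists N => n Hn. apply: Rle_lt_trans (geometric_tail N n Hn) _.
  have := HN N (le_n _). rewrite /Rdiv. lra.
Qed.

Lemma geometric_lim_bound y : filterlim z eventually (locally y) ->
  forall n, norm (minus (z n) y) <= M * q ^ n / (1 - q).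
Proof.
  move=> Hy n. apply: Rle_plus_epsilon => eps He.
  have [N HN] := proj1 (filterlim_locally_ball_norm _ _) Hy (mkposreal _ He).
  have Hm : norm (minus (z (max n N)) y) < eps := HN (max n N) ltac:(lia).
  apply: Rle_trans (norm_minus_triangle _ (z (max n N)) _) _.
  rewrite norm_minus_sym. have := geometric_tail n (max n N) ltac:(lia). move=> *. lra.
Qed.

End Geometric.

Lemma contraction_fixed_point (P : X -> X) (q : R) : 0 <= q < 1 ->
  (forall u v, norm (minus (P u) (P v)) <= q * norm (minus u v)) -> exists u, P u = u.
Proof.
  move=> Hq HP. set z := fun n => Nat.iter n P zero.
  set M := norm (minus (z 1%nat) (z O)).
  have Hstep : forall n, norm (minus (z (S n)) (z n)) <= M * q ^ n.
  { elim=> [|n IH]; first by rewrite /= Rmult_1_r; apply: Rle_refl.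
    have Hn : norm (minus (z (S (S n))) (z (S n))) <= q * norm (minus (z (S n)) (z n))
      := HP (z (S n)) (z n).
    rewrite [q ^ S n]/=. nra. }
  set u := lim (filtermap z eventually).
  have Hlim := geometric_lim_bound z M q Hq Hstep u (geometric_seq_lim z M q Hq Hstep).
  have HM : 0 <= M / (1 - q) by apply: Rdiv_le_0_compat; [exact: norm_ge_0 | lra].
  exists u. apply: ball_norm_eq => eps. rewrite /ball_norm norm_minus_sym.
  have [N HN] := geometric_small _ q (eps / 2) HM Hq ltac:(have := cond_pos eps; lra).
  apply: Rle_lt_trans (norm_minus_triangle _ (z (S N)) _) _.
  have HPu : norm (minus (P u) (z (S N))) <= q * norm (minus u (z N)) := HP u (z N).
  rewrite (norm_minus_sym u) in HPu.
  have := Hlim N. have := Hlim (S N). have := HN N (le_n _). have := HN (S N) ltac:(lia).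
  have := norm_ge_0 (minus (z N) u). rewrite /Rdiv. move=> *. nra.
Qed.

Lemma eq_of_norm_minus_le0 (a b : X) : norm (minus a b) <= 0 -> a = b.
Proof.
  move=> H. apply: ball_norm_eq => eps. rewrite /ball_norm norm_minus_sym.
  have := cond_pos eps. lra.
Qed.

Lemma cont_on_const (I : R -> Prop) (x : X) : cont_on I (fun _ => x).
Proof.
  apply/cont_on_eps => t _ eps He. exists 1. split; first lra.
  move=> *. by rewrite minus_eq_zero norm_zero.
Qed.

Section HistoryFixedPoint.
Variables (T : Rbar) (Phi : (R -> X) -> (R -> X)).
Let I := time_interval T.
Hypothesis Phi_cont : forall u, cont_on I u -> cont_on I (Phi u).
Hypothesis Phi_hist : history_dependent I Phi.

Lemma time_interval_seg t s : I t -> 0 <= s <= t -> I s.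
Proof.
  rewrite /I /time_interval => -[H0 H1] Hs. split; first lra.
  apply: Rbar_le_trans H1. simpl. lra.
Qed.

Lemma time_interval_nbhd t : I t -> exists b, t <= b /\ (forall s, 0 <= s <= b -> I s) /\
  (forall s, I s -> Rabs (s - t) < 1 -> s <= b).
Proof.
  rewrite /I /time_interval => -[H0 H1]. case: T H1 => [Tr| |] /= H1.
  - exists Tr. split; first done. split; first by move=> s Hs /=; lra.
    by move=> s [_ Hs] _.
  - exists (t + 1). split; first lra. split; first by move=> s Hs /=; lra.
    move=> s _ Hs. split_Rabs; lra.
  - by [].
Qed.

Lemma history_dependent_seg b : (forall s, 0 <= s <= b -> I s) -> exists L, 0 < L /\
  forall u1 u2, cont_on I u1 -> cont_on I u2 -> forall t, 0 <= t <= b ->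
  norm (minus (Phi u1 t) (Phi u2 t)) <= L * RInt (fun s => norm (minus (u1 s) (u2 s))) 0 t.
Proof. move=> Hb. apply: (Phi_hist (fun s => 0 <= s <= b)) => //. exact: compact_P3. Qed.

Lemma history_fixed_point_unique u v : cont_on I u -> cont_on I v ->
  (forall t, I t -> Phi u t = u t) -> (forall t, I t -> Phi v t = v t) ->
  forall t, I t -> u t = v t.
Proof.
  move=> Hu Hv Hfu Hfv t It. apply: eq_of_norm_minus_le0.
  have Hseg : forall s, 0 <= s <= t -> I s by move=> s; exact: time_interval_seg.
  have [L [HL HLS]] := history_dependent_seg t Hseg.
  apply: (gronwall_zero _ t L (proj1 It) (Rlt_le _ _ HL)
    (cont_seg_norm_minus I u v t Hu Hv Hseg)); last by split; [exact: (proj1 It) | lra].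
  move=> s Hs. rewrite -(Hfu s (Hseg s Hs)) -(Hfv s (Hseg s Hs)). exact: HLS.
Qed.

Definition picard (n : nat) : R -> X := Nat.iter n Phi (fun _ => zero).

Definition picard_lim (t : R) : X := lim (filtermap (fun n => picard n t) eventually).

Lemma picard_cont n : cont_on I (picard n).
Proof. elim: n => [|n IH]; [exact: cont_on_const | exact: Phi_cont]. Qed.

Lemma picard_step_bound b : 0 <= b -> (forall s, 0 <= s <= b -> I s) -> exists C, 0 <= C /\
  forall n s, 0 <= s <= b -> norm (minus (picard (S n) s) (picard n s)) <= C * (/ 2) ^ n.
Proof.
  move=> Hb0 Hb. have [L [HL HLS]] := history_dependent_seg b Hb.
  set d := fun n s => norm (minus (picard (S n) s) (picard n s)).
  have dcont : forall n, cont_seg b (d n).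
  { move=> n. apply: (cont_seg_norm_minus I) => //; exact: picard_cont. }
  have [M [HM HMb]] := cont_seg_bounded b (d O) Hb0 (dcont O).
  have Hit := iterated_integral_bound d b L M (Rlt_le _ _ HL) HM
    (fun n => cont_seg_ex_RInt b (d n) Hb0 (dcont n)) HMb
    (fun n s Hs => HLS _ _ (picard_cont (S n)) (picard_cont n) s Hs).
  exists (M * exp ((2 * L + 1) * b)). split.
  { have := exp_pos ((2 * L + 1) * b). nra. }
  move=> n s Hs. apply: Rle_trans (Hit n s Hs) _.
  apply: Rmult_le_compat_r; first by apply: pow_le; lra.
  apply: Rmult_le_compat_l => //.
  case: (Req_dec s b) => [->|Hne]; first lra.
  apply/Rlt_le/exp_increasing. apply: Rmult_lt_compat_l; lra.
Qed.

Lemma picard_lim_bound b : 0 <= b -> (forall s, 0 <= s <= b -> I s) -> exists C, 0 <= C /\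
  forall n s, 0 <= s <= b -> norm (minus (picard n s) (picard_lim s)) <= C * (/ 2) ^ n.
Proof.
  move=> Hb0 Hb. have [C [HC HCb]] := picard_step_bound b Hb0 Hb.
  exists (2 * C). split; first lra. move=> n s Hs.
  have Hstep := fun n => HCb n s Hs.
  have := geometric_lim_bound (fun n => picard n s) C (/ 2) ltac:(lra) Hstep _
    (geometric_seq_lim _ C (/ 2) ltac:(lra) Hstep) n.
  have -> : C * (/ 2) ^ n / (1 - / 2) = 2 * C * (/ 2) ^ n by field. done.
Qed.

(* A uniform limit on segments [0, b] of continuous functions. *)
Lemma picard_lim_cont : cont_on I picard_lim.
Proof.
  apply/cont_on_eps => t It eps He.
  have [b [Htb [Hb Hb2]]] := time_interval_nbhd t It.
  have Hb0 : 0 <= b by have := proj1 It; lra.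
  have [C [HC HCb]] := picard_lim_bound b Hb0 Hb.
  have [N HN] := geometric_small C (/ 2) (eps / 3) HC ltac:(lra) ltac:(lra).
  have HCN := HN N (le_n _).
  have [d1 [Hd1 H1]] := proj1 (cont_on_eps I _) (picard_cont N) t It (eps / 3) ltac:(lra).
  exists (Rmin d1 1). split; first by apply: Rmin_glb_lt; lra.
  move=> s Is Hs. have := Rmin_l d1 1. have := Rmin_r d1 1. move=> *.
  have Hsb : 0 <= s <= b by split; [exact: (proj1 Is) | apply: Hb2 => //; lra].
  have := H1 s Is ltac:(lra). have := HCb N s Hsb. have := HCb N t ltac:(split; [exact: (proj1 It) | lra]).
  have := norm_minus_triangle (picard_lim s) (picard N s) (picard_lim t).
  have := norm_minus_triangle (picard N s) (picard N t) (picard_lim t).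
  have := norm_minus_sym (picard_lim s) (picard N s). move=> *. lra.
Qed.

Lemma picard_lim_fixed t : I t -> Phi picard_lim t = picard_lim t.
Proof.
  move=> It. have Ht0 := proj1 It.
  have Hseg : forall s, 0 <= s <= t -> I s by move=> s; exact: time_interval_seg.
  have [L [HL HLS]] := history_dependent_seg t Hseg.
  have [C [HC HCb]] := picard_lim_bound t Ht0 Hseg.
  apply: ball_norm_eq => eps. rewrite /ball_norm.
  have HQ : 0 <= L * t * C + C by have := Rmult_le_pos _ _ (Rmult_le_pos _ _ (Rlt_le _ _ HL) Ht0) HC; lra.
  have [N HN] := geometric_small _ (/ 2) eps HQ ltac:(lra) (cond_pos eps).
  have HNN := HN N (le_n _). have Hh := pow_le (/ 2) N ltac:(lra).
  have Hint : RInt (fun s => norm (minus (picard_lim s) (picard N s))) 0 t <= t * (C * (/ 2) ^ N).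
  { apply: Rle_trans (RInt_le _ (fun _ => C * (/ 2) ^ N) _ _ _ _ _ _) _.
    - lra.
    - apply: (cont_seg_ex_RInt t) => //; last by split; lra.
      apply: (cont_seg_norm_minus I) => //; [exact: picard_lim_cont | exact: picard_cont].
    - exact: ex_RInt_const.
    - move=> x Hx. rewrite norm_minus_sym. apply: HCb. lra.
    - rewrite RInt_const /scal /= /mult /=. lra. }
  have HS : norm (minus (Phi picard_lim t) (Phi (picard N) t)) <= L * (t * (C * (/ 2) ^ N)).
  { apply: Rle_trans (HLS _ _ picard_lim_cont (picard_cont N) t ltac:(lra)) _.
    apply: Rmult_le_compat_l; lra. }
  have H2 := HCb (S N) t ltac:(lra).
  change (picard (S N) t) with (Phi (picard N) t) in H2.
  change ((/ 2) ^ S N) with (/ 2 * (/ 2) ^ N) in H2.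
  rewrite norm_minus_sym.
  apply: Rle_lt_trans (norm_minus_triangle _ (Phi (picard N) t) _) _.
  apply: Rle_lt_trans (Rplus_le_compat _ _ _ _ HS H2) _.
  have := Rmult_le_pos _ _ HC Hh. move=> *. lra.
Qed.

Theorem history_fixed_point : exists u, cont_on I u /\ forall t, I t -> Phi u t = u t.
Proof. exists picard_lim. split; [exact: picard_lim_cont | exact: picard_lim_fixed]. Qed.

End HistoryFixedPoint.

Section StronglyConvexMin.
Variables (K : X -> Prop) (F : X -> R).
Hypothesis K_ne : exists x, K x.
Hypothesis K_closed : closed K.
Hypothesis K_convex : forall u v l, K u -> K v -> 0 <= l <= 1 -> K (plus (scal l u) (scal (1 - l) v)).
Hypothesis F_lb : exists B, forall w, K w -> B <= F w.
Hypothesis F_mid : forall a b, K a -> K b ->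
  F (plus (scal (/ 2) a) (scal (1 - / 2) b)) <= (F a + F b) / 2 - norm (minus a b) * norm (minus a b) / 8.
Hypothesis F_lsc : forall w, K w -> forall eps, 0 < eps -> exists del, 0 < del /\
  forall v, K v -> norm (minus v w) < del -> F w <= F v + eps.

(* A minimizing sequence with [F (ws n) < inf F + 4^-n] has steps [<= 3 * 2^-n]
   by the midpoint inequality. *)
Lemma strongly_convex_min : exists w, K w /\ forall v, K v -> F w <= F v.
Proof.
  have [m [Hm Happrox]] := exists_inf K F K_ne F_lb.
  have Hhalf : 0 < / 2 by lra.
  have [ws Hws] := choice (fun n w => K w /\ F w < m + (/ 2) ^ n * (/ 2) ^ n)
    (fun n => Happrox _ (Rmult_lt_0_compat _ _ (pow_lt _ n Hhalf) (pow_lt _ n Hhalf))).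
  have Hstep : forall n, norm (minus (ws (S n)) (ws n)) <= 3 * (/ 2) ^ n.
  { move=> n. have [Ka Fa] := Hws (S n). have [Kb Fb] := Hws n.
    have Hmid := Hm _ (K_convex _ _ (/ 2) Ka Kb ltac:(lra)).
    have Hab := F_mid _ _ Ka Kb.
    have Hh := pow_le (/ 2) n ltac:(lra).
    change ((/ 2) ^ S n) with (/ 2 * (/ 2) ^ n) in Fa.
    apply: sqr_le_sqr_nonneg; [exact: norm_ge_0 | lra |].
    set h := (/ 2) ^ n in Fa Fb Hh *. nra. }
  set w := lim (filtermap ws eventually).
  have Hlim := geometric_seq_lim ws 3 (/ 2) ltac:(lra) Hstep.
  have Hbound := geometric_lim_bound ws 3 (/ 2) ltac:(lra) Hstep w Hlim.
  have Kw : K w.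
  { apply: (closed_filterlim (F := eventually) ws K w Hlim _ K_closed) => n.
    exact: (proj1 (Hws n)). }
  have Fw : F w <= m.
  { apply: Rle_plus_epsilon => eps He.
    have [del [Hdel Hlsc]] := F_lsc w Kw (eps / 2) ltac:(lra).
    have [N HN] := geometric_small 6 (/ 2) (Rmin del (eps / 2)) ltac:(lra) ltac:(lra)
      ltac:(apply: Rmin_glb_lt; lra).
    have HNN := HN N (le_n _). have Hm1 := Rmin_l del (eps / 2). have Hm2 := Rmin_r del (eps / 2).
    have [KN FN] := Hws N.
    have Hh0 := pow_le (/ 2) N ltac:(lra).
    have Hh1 : (/ 2) ^ N <= 1 by rewrite -(pow1 N); apply: pow_incr; lra.
    have Hhh : (/ 2) ^ N * (/ 2) ^ N <= (/ 2) ^ N.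
    { have := Rmult_le_compat_l _ _ _ Hh0 Hh1. lra. }
    have HwN : norm (minus (ws N) w) < del by have := Hbound N; lra.
    have := Hlsc (ws N) KN HwN. lra. }
  exists w. split; first exact: Kw.
  move=> v Kv. exact: Rle_trans Fw (Hm v Kv).
Qed.

End StronglyConvexMin.

End NormedModule.

Section Hilbert.
Context {X : CompleteNormedModule R_AbsRing} (ip : X -> X -> R) (Hip : is_inner_product ip).

Lemma ip_sym x y : ip x y = ip y x.
Proof. apply Hip. Qed.
Lemma ip_plus_l x y z : ip (plus x y) z = ip x z + ip y z.
Proof. apply Hip. Qed.
Lemma ip_scal_l (a : R) x y : ip (scal a x) y = a * ip x y.
Proof. apply Hip. Qed.
Lemma ip_self_ge0 x : 0 <= ip x x.
Proof. apply Hip. Qed.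
Lemma norm_ip x : norm x = sqrt (ip x x).
Proof. apply Hip. Qed.

Lemma ip_plus_r x y z : ip x (plus y z) = ip x y + ip x z.
Proof. by rewrite ip_sym ip_plus_l (ip_sym y) (ip_sym z). Qed.
Lemma ip_scal_r (a : R) x y : ip x (scal a y) = a * ip x y.
Proof. by rewrite ip_sym ip_scal_l (ip_sym y). Qed.
Lemma ip_zero_l y : ip zero y = 0.
Proof. have := ip_plus_l zero zero y. rewrite plus_zero_r. lra. Qed.
Lemma ip_zero_r y : ip y zero = 0.
Proof. rewrite ip_sym. exact: ip_zero_l. Qed.
Lemma ip_opp_l x y : ip (opp x) y = - ip x y.
Proof. have := ip_plus_l x (opp x) y. rewrite plus_opp_r ip_zero_l. lra. Qed.
Lemma ip_opp_r x y : ip y (opp x) = - ip y x.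
Proof. by rewrite ip_sym ip_opp_l ip_sym. Qed.
Lemma ip_minus_l x y z : ip (minus x y) z = ip x z - ip y z.
Proof. rewrite /minus ip_plus_l ip_opp_l. ring. Qed.
Lemma ip_minus_r x y z : ip z (minus x y) = ip z x - ip z y.
Proof. rewrite /minus ip_plus_r ip_opp_r. ring. Qed.

Lemma norm_sqr_ip x : norm x * norm x = ip x x.
Proof. rewrite norm_ip. exact/sqrt_sqrt/ip_self_ge0. Qed.

Lemma ip_le_norm_mul x y : ip x y <= norm x * norm y.
Proof.
  have Ht : norm (plus x y) <= norm x + norm y := norm_triangle x y.
  have := norm_ge_0 (plus x y). have := norm_ge_0 x. have := norm_ge_0 y.
  have E := norm_sqr_ip (plus x y).
  rewrite ip_plus_l !ip_plus_r (ip_sym y x) -norm_sqr_ip -(norm_sqr_ip y) in E.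
  move=> *. nra.
Qed.

Lemma eq_of_ip_minus_self a b : ip (minus a b) (minus a b) = 0 -> a = b.
Proof.
  rewrite -norm_sqr_ip => H. apply: eq_of_norm_minus_le0.
  have := norm_ge_0 (minus a b). nra.
Qed.

Ltac ip_expand := repeat progress rewrite ?ip_plus_l ?ip_plus_r ?ip_minus_l ?ip_minus_r
  ?ip_scal_l ?ip_scal_r ?ip_opp_l ?ip_opp_r ?ip_zero_l ?ip_zero_r.
Ltac ip_orient := repeat match goal with
  | |- context [ip ?a ?b] => match goal with |- context [ip b a] =>
       tryif constr_eq a b then fail else rewrite (ip_sym b a) end end.
(* Proves an identity [a = b] between vectors by expanding [ip (a - b) (a - b) = 0]
   into a polynomial identity between inner products. *)
Ltac vec_eq := apply: eq_of_ip_minus_self; ip_expand; ip_orient; ring.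

Lemma ip_midpoint_sqr (a b x : X) :
  let m := plus (scal (/ 2) a) (scal (1 - / 2) b) in
  ip (minus m x) (minus m x)
  = / 2 * ip (minus a x) (minus a x) + / 2 * ip (minus b x) (minus b x) - / 4 * ip (minus a b) (minus a b).
Proof. rewrite /=. ip_expand. ip_orient. field. Qed.

Lemma ip_segment_sqr (w v x : X) (l : R) :
  let wl := plus (scal l v) (scal (1 - l) w) in
  ip (minus wl x) (minus wl x)
  = ip (minus w x) (minus w x) + 2 * l * ip (minus w x) (minus v w) + l * l * ip (minus v w) (minus v w).
Proof. rewrite /=. ip_expand. ip_orient. ring. Qed.

Definition is_prox (K : X -> Prop) (g : X -> R) (x w : X) : Prop :=
  K w /\ forall v, K v -> 0 <= ip (minus w x) (minus v w) + (g v - g w).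

Lemma prox_nonexpansive K g x1 x2 w1 w2 : is_prox K g x1 w1 -> is_prox K g x2 w2 ->
  norm (minus w1 w2) <= norm (minus x1 x2).
Proof.
  move=> [K1 H1] [K2 H2]. have := H1 w2 K2. have := H2 w1 K1.
  have E : ip (minus w1 x1) (minus w2 w1) + ip (minus w2 x2) (minus w1 w2) =
    - ip (minus w1 w2) (minus w1 w2) + ip (minus x1 x2) (minus w1 w2) by ip_expand; ip_orient; ring.
  rewrite -norm_sqr_ip in E.
  have := ip_le_norm_mul (minus x1 x2) (minus w1 w2).
  have := norm_ge_0 (minus w1 w2). have := norm_ge_0 (minus x1 x2). move=> *. nra.
Qed.

Section Prox.
Variables (K : X -> Prop) (g : X -> R) (x : X).
Hypothesis K_ne : exists x0, K x0.
Hypothesis K_closed : closed K.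
Hypothesis K_convex : forall u v l, K u -> K v -> 0 <= l <= 1 -> K (plus (scal l u) (scal (1 - l) v)).
Hypothesis g_convex : forall u v l, K u -> K v -> 0 <= l <= 1 ->
  g (plus (scal l u) (scal (1 - l) v)) <= l * g u + (1 - l) * g v.
Hypothesis g_lip : exists Lg, 0 <= Lg /\
  forall u v, K u -> K v -> Rabs (g u - g v) <= Lg * norm (minus u v).

Let F w := ip (minus w x) (minus w x) / 2 + g w.

Lemma prox_objective_lb : exists B, forall w, K w -> B <= F w.
Proof.
  have [w0 K0] := K_ne. have [Lg [HLg Hlip]] := g_lip.
  exists (g w0 - Lg * norm (minus x w0) - Lg * Lg / 2) => w Kw.
  rewrite /F -norm_sqr_ip.
  have := Hlip w w0 Kw K0. have := norm_minus_triangle w x w0.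
  have := Rmult_le_compat_l Lg _ _ HLg (norm_minus_triangle w x w0).
  have := pow2_ge_0 (norm (minus w x) - Lg). move=> *. split_Rabs; nra.
Qed.

Lemma prox_objective_mid a b : K a -> K b ->
  F (plus (scal (/ 2) a) (scal (1 - / 2) b)) <= (F a + F b) / 2 - norm (minus a b) * norm (minus a b) / 8.
Proof.
  move=> Ka Kb. rewrite /F ip_midpoint_sqr norm_sqr_ip.
  have := g_convex a b (/ 2) Ka Kb ltac:(lra). lra.
Qed.

Lemma prox_objective_lsc w : K w -> forall eps, 0 < eps -> exists del, 0 < del /\
  forall v, K v -> norm (minus v w) < del -> F w <= F v + eps.
Proof.
  move=> Kw eps He. have [Lg [HLg Hlip]] := g_lip.
  have Ha := norm_ge_0 (minus w x).
  set a := norm (minus w x) in Ha *.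
  exists (eps / (a + Lg + 1)). split; first by apply: Rdiv_lt_0_compat; lra.
  move=> v Kv Hv. rewrite /F -!norm_sqr_ip -/a.
  have Hb := norm_ge_0 (minus v x). have Hd := norm_ge_0 (minus v w).
  set b := norm (minus v x) in Hb *. set d := norm (minus v w) in Hv Hd *.
  have Hab : a <= d + b by rewrite /a /d /b (norm_minus_sym v w); exact: norm_minus_triangle.
  have Hg : g w - g v <= Lg * d.
  { have := Hlip w v Kw Kv. rewrite norm_minus_sym -/d. split_Rabs; lra. }
  have Hsq : a * a - b * b <= 2 * a * d.
  { case: (Rle_lt_dec a b) => ?; nra. }
  have Hdel : d * (a + Lg + 1) <= eps.
  { have -> : eps = eps / (a + Lg + 1) * (a + Lg + 1) by field; lra.
    apply: Rmult_le_compat_r; lra. }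
  nra.
Qed.

Lemma prox_exists : exists w, is_prox K g x w.
Proof.
  have [w [Kw Hmin]] := strongly_convex_min K F K_ne K_closed K_convex prox_objective_lb
    prox_objective_mid prox_objective_lsc.
  exists w. split; first exact: Kw.
  move=> v Kv. apply: (first_variation_nonneg _ (ip (minus v w) (minus v w) / 2)).
  { have := ip_self_ge0 (minus v w). lra. }
  move=> l Hl.
  have := Hmin _ (K_convex v w l Kv Kw ltac:(lra)).
  have := g_convex v w l Kv Kw ltac:(lra).
  rewrite /F ip_segment_sqr. nra.
Qed.

End Prox.

Section Stationary.
Variables (K : X -> Prop) (j : X -> R) (A : X -> X) (mA LA : R).
Hypothesis HK : closed_convex_cone K.
Hypothesis Hj : j_hyp K j.
Hypothesis HmA : 0 < mA.
Hypothesis HLA : 0 < LA.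
Hypothesis A_mono : forall u v, ip (minus (A u) (A v)) (minus u v) >= mA * (norm (minus u v)) ^ 2.
Hypothesis A_lip : forall u v, norm (minus (A u) (A v)) <= LA * norm (minus u v).

(* The set below is [Ct ip K j f t] for [f0 = f t]. *)
Definition stationary_sol (f0 eta u : X) : Prop := K u /\
  normal_cone ip (fun xi => exists c, Cset ip K j c /\ xi = minus f0 c) (plus (A u) eta) (opp u).

Lemma cone_zero : K zero.
Proof.
  have [[x Kx] [_ [_ Hscal]]] := HK. have := Hscal x 0 Kx ltac:(lra).
  suff -> : scal 0 x = zero by []. exact: scal_zero_l.
Qed.

Lemma j_zero : j zero = 0.
Proof.
  have H : j (scal 2 zero) = 2 * j zero := proj1 (proj2 Hj) zero 2 cone_zero ltac:(lra).
  have E : j (scal 2 zero) = j zero by rewrite scal_zero_r.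
  lra.
Qed.

Lemma Cset_iff c : Cset ip K j c <-> forall v, K v -> ip c v <= j v.
Proof.
  rewrite /Cset /Jext. split.
  - move=> H v Kv. have := H v. by case: excluded_middle_informative.
  - move=> H v. case: excluded_middle_informative => //= Kv. exact: H.
Qed.

Lemma forward_step_sqr_le (g0 u1 u2 : X) :
  let rho := mA / (LA * LA) in
  let y1 := minus u1 (scal rho (minus (A u1) g0)) in
  let y2 := minus u2 (scal rho (minus (A u2) g0)) in
  norm (minus y1 y2) * norm (minus y1 y2) <= (1 - mA * mA / (LA * LA)) * (norm (minus u1 u2) * norm (minus u1 u2)).
Proof.
  move=> rho y1 y2.
  have Hrho : 0 < rho by apply: Rdiv_lt_0_compat; nra.
  have E : norm (minus y1 y2) * norm (minus y1 y2) = norm (minus u1 u2) * norm (minus u1 u2)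
    - 2 * rho * ip (minus (A u1) (A u2)) (minus u1 u2)
    + rho * rho * (norm (minus (A u1) (A u2)) * norm (minus (A u1) (A u2))).
  { rewrite !norm_sqr_ip /y1 /y2. ip_expand; ip_orient; ring. }
  rewrite E.
  have := A_mono u1 u2. have := A_lip u1 u2.
  have := norm_ge_0 (minus (A u1) (A u2)). have := norm_ge_0 (minus u1 u2).
  set a := norm (minus (A u1) (A u2)). set d := norm (minus u1 u2). move=> Hd Ha Hlip Hmono.
  have Ha2 : a * a <= LA * LA * (d * d) by nra.
  have -> : (1 - mA * mA / (LA * LA)) * (d * d)
    = d * d - 2 * rho * (mA * d ^ 2) + rho * rho * (LA * LA * (d * d)) by rewrite /rho; field; nra.
  have : rho * rho * (a * a) <= rho * rho * (LA * LA * (d * d)) by apply: Rmult_le_compat_l; nra.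
  have : 2 * rho * (mA * d ^ 2) <= 2 * rho * ip (minus (A u1) (A u2)) (minus u1 u2)
    by apply: Rmult_le_compat_l; lra.
  lra.
Qed.

(* Banach's fixed point theorem for [u |-> prox (u - rho (A u - g0))], a contraction
   for [rho = mA / LA^2]. *)
Lemma vi_exists (g0 : X) : exists u, K u /\
  forall v, K v -> 0 <= ip (minus (A u) g0) (minus v u) + (j v - j u).
Proof.
  have [[x0 Kx0] [Kcl [Kconv _]]] := HK. have [jconv [_ [Lj [HLj jlip]]]] := Hj.
  set rho := mA / (LA * LA).
  have Hrho : 0 < rho by apply: Rdiv_lt_0_compat; nra.
  have gconv : forall u v l, K u -> K v -> 0 <= l <= 1 ->
    rho * j (plus (scal l u) (scal (1 - l) v)) <= l * (rho * j u) + (1 - l) * (rho * j v).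
  { move=> u v l Ku Kv Hl.
    apply: Rle_trans (Rmult_le_compat_l rho _ _ (Rlt_le _ _ Hrho) (jconv u v l Ku Kv Hl)) _.
    apply: Req_le. ring. }
  have glip : exists Lg, 0 <= Lg /\
    forall u v, K u -> K v -> Rabs (rho * j u - rho * j v) <= Lg * norm (minus u v).
  { exists (rho * Lj). split; first by apply: Rmult_le_pos; lra.
    move=> u v Ku Kv. rewrite -Rmult_minus_distr_l Rabs_mult (Rabs_right rho); last lra.
    rewrite Rmult_assoc. apply: Rmult_le_compat_l; [lra | exact: jlip]. }
  have [prox Hprox] := choice (is_prox K (fun v => rho * j v))
    (fun x => prox_exists K _ x (ex_intro _ x0 Kx0) Kcl Kconv gconv glip).
  set P := fun u => prox (minus u (scal rho (minus (A u) g0))).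
  set k := Rmax (1 - mA * mA / (LA * LA)) 0.
  have Hk1 : k < 1.
  { rewrite /k /Rmax. case: Rle_dec => _; first lra.
    have : 0 < mA * mA / (LA * LA) by apply: Rdiv_lt_0_compat; nra. lra. }
  have Hk0 : 0 <= k by apply: Rmax_r.
  set q := (1 + k) / 2.
  have [u Hu] : exists u, P u = u.
  { apply: (contraction_fixed_point P q); first by rewrite /q; lra.
    move=> u1 u2. apply: Rle_trans (prox_nonexpansive _ _ _ _ _ _ (Hprox _) (Hprox _)) _.
    have Hy := forward_step_sqr_le g0 u1 u2. rewrite -/rho in Hy.
    have Hck : 1 - mA * mA / (LA * LA) <= k := Rmax_l _ _.
    have Hkq : k <= q * q by rewrite /q; nra.
    have Hd := norm_ge_0 (minus u1 u2).
    apply: sqr_le_sqr_nonneg; [exact: norm_ge_0 | rewrite /q; nra |].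
    apply: Rle_trans Hy _.
    have -> : q * norm (minus u1 u2) * (q * norm (minus u1 u2))
      = q * q * (norm (minus u1 u2) * norm (minus u1 u2)) by ring.
    apply: Rmult_le_compat_r; first nra. lra. }
  have [Ku Hvi] := Hprox (minus u (scal rho (minus (A u) g0))).
  rewrite -/(P u) Hu in Ku Hvi.
  exists u. split; first exact: Ku.
  move=> v Kv. have := Hvi v Kv.
  have -> : ip (minus u (minus u (scal rho (minus (A u) g0)))) (minus v u)
    = rho * ip (minus (A u) g0) (minus v u) by ip_expand; ip_orient; ring.
  move=> H. apply: (Rmult_le_reg_l rho) => //. lra.
Qed.

(* Testing the inequality with [v = 0] and [v = 2 u] (cone, positive homogeneity)
   gives [(c, u) = j u] for [c = f0 - eta - A u]. *)
Lemma stationary_sol_of_vi (f0 eta u : X) : K u ->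
  (forall v, K v -> 0 <= ip (minus (A u) (minus f0 eta)) (minus v u) + (j v - j u)) ->
  stationary_sol f0 eta u.
Proof.
  move=> Ku VI. set c := minus (minus f0 eta) (A u).
  have Hcu : ip c u = j u.
  { have V1 := VI zero cone_zero.
    have V2 := VI (scal 2 u) (proj2 (proj2 (proj2 HK)) u 2 Ku ltac:(lra)).
    rewrite j_zero in V1. rewrite (proj1 (proj2 Hj) u 2 Ku ltac:(lra)) in V2.
    move: V1 V2. rewrite /c. ip_expand; ip_orient. lra. }
  have Cc : Cset ip K j c.
  { apply/Cset_iff => v Kv. have := VI v Kv. move: Hcu. rewrite /c. ip_expand; ip_orient. lra. }
  split; first exact: Ku. split.
  - exists c. split; first exact: Cc. rewrite /c. vec_eq.
  - move=> _ [c' [Cc' ->]]. have := proj1 (Cset_iff c') Cc' u Ku.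
    have -> : plus (A u) eta = minus f0 c by rewrite /c; vec_eq.
    move: Hcu. ip_expand; ip_orient. lra.
Qed.

Lemma stationary_sol_exists (f0 eta : X) : exists u, stationary_sol f0 eta u.
Proof.
  have [u [Ku VI]] := vi_exists (minus f0 eta).
  exists u. exact: stationary_sol_of_vi.
Qed.

(* Test each normal-cone inequality at the other solution's point of the shifted C. *)
Lemma stationary_sol_lipschitz (f1 f2 e1 e2 u1 u2 : X) :
  stationary_sol f1 e1 u1 -> stationary_sol f2 e2 u2 ->
  mA * norm (minus u1 u2) <= norm (minus f1 f2) + norm (minus e1 e2).
Proof.
  move=> [_ [[c1 [C1 E1]] N1]] [_ [[c2 [C2 E2]] N2]].
  have I1 := N1 (minus f1 c2) (ex_intro _ c2 (conj C2 eq_refl)).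
  have I2 := N2 (minus f2 c1) (ex_intro _ c1 (conj C1 eq_refl)).
  rewrite E1 in I1. rewrite E2 in I2.
  have R1 : ip (minus u1 u2) (plus (A u1) e1) = ip (minus u1 u2) (minus f1 c1) by rewrite E1.
  have R2 : ip (minus u1 u2) (plus (A u2) e2) = ip (minus u1 u2) (minus f2 c2) by rewrite E2.
  have Mo := A_mono u1 u2.
  have CS := ip_le_norm_mul (minus u1 u2) (minus (minus f1 e1) (minus f2 e2)).
  have Hn := norm_ge_0 (minus u1 u2).
  have HN := norm_minus_minus f1 e1 f2 e2.
  set n := norm (minus u1 u2) in Mo CS Hn *.
  set N := norm (minus (minus f1 e1) (minus f2 e2)) in CS HN.
  have key : mA * (n * n) <= n * N.
  { move: I1 I2 R1 R2 Mo CS. ip_expand. ip_orient. move=> *. nra. }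
  case: (Rle_lt_dec n 0) => Hn0.
  - have -> : n = 0 by lra. have := norm_ge_0 (minus f1 f2). have := norm_ge_0 (minus e1 e2). lra.
  - apply: Rle_trans HN. apply: (Rmult_le_reg_l n) => //. nra.
Qed.

Lemma stationary_sol_unique (f0 eta u1 u2 : X) :
  stationary_sol f0 eta u1 -> stationary_sol f0 eta u2 -> u1 = u2.
Proof.
  move=> H1 H2. apply: eq_of_norm_minus_le0.
  have := stationary_sol_lipschitz _ _ _ _ _ _ H1 H2.
  rewrite !minus_eq_zero norm_zero Rplus_0_l => H.
  apply: (Rmult_le_reg_l mA) => //. lra.
Qed.

Lemma stationary_solution_map : exists sol : X -> X -> X,
  forall f0 eta, stationary_sol f0 eta (sol f0 eta).
Proof.
  have [sol Hsol] := choice (fun p u => stationary_sol (fst p) (snd p) u)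
    (fun p => stationary_sol_exists (fst p) (snd p)).
  exists (fun f0 eta => sol (f0, eta)) => f0 eta. exact: (Hsol (f0, eta)).
Qed.

Section Quasistatic.
Variables (I : R -> Prop) (f : R -> X).
Hypothesis f_cont : cont_on I f.

Lemma stationary_sol_cont_on (eta u : R -> X) : cont_on I eta ->
  (forall t, I t -> stationary_sol (f t) (eta t) (u t)) -> cont_on I u.
Proof.
  move=> /cont_on_eps Heta Hu. move/cont_on_eps: f_cont => Hf.
  apply/cont_on_eps => t It eps He.
  have HmAe : 0 < mA * eps / 2 by have := Rmult_lt_0_compat _ _ HmA He; lra.
  have [d1 [Hd1 H1]] := Hf t It _ HmAe.
  have [d2 [Hd2 H2]] := Heta t It _ HmAe.
  exists (Rmin d1 d2). split; first exact: Rmin_glb_lt.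
  move=> s Is Hs. have := Rmin_l d1 d2. have := Rmin_r d1 d2. move=> *.
  have := stationary_sol_lipschitz _ _ _ _ _ _ (Hu s Is) (Hu t It).
  have := H1 s Is ltac:(lra). have := H2 s Is ltac:(lra). move=> *.
  apply: (Rmult_lt_reg_l mA) => //. lra.
Qed.

Lemma stationary_sol_history_dependent (S : (R -> X) -> (R -> X)) (sol : X -> X -> X) :
  history_dependent I S -> (forall f0 eta, stationary_sol f0 eta (sol f0 eta)) ->
  history_dependent I (fun u t => sol (f t) (S u t)).
Proof.
  move=> HS Hsol J HJ Jc. have [L [HL HLS]] := HS J HJ Jc.
  exists (L / mA). split; first exact: Rdiv_lt_0_compat.
  move=> u1 u2 Hu1 Hu2 t Jt.
  have := stationary_sol_lipschitz _ _ _ _ _ _ (Hsol (f t) (S u1 t)) (Hsol (f t) (S u2 t)).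
  rewrite minus_eq_zero norm_zero Rplus_0_l => H.
  apply: (Rmult_le_reg_l mA) => //.
  have -> : mA * (L / mA * RInt (fun s => norm (minus (u1 s) (u2 s))) 0 t)
    = L * RInt (fun s => norm (minus (u1 s) (u2 s))) 0 t by field; lra.
  apply: Rle_trans H _. exact: HLS.
Qed.

End Quasistatic.

End Stationary.

End Hilbert.

Theorem corollary3p3
  (X : CompleteNormedModule R_AbsRing) (ip : X -> X -> R)
  (T : Rbar) (K : X -> Prop) (A : X -> X) (mA LA : R)
  (f : R -> X) (S : (R -> X) -> (R -> X)) (j : X -> R) :
  is_inner_product ip ->
  Rbar_lt 0 T ->
  closed_convex_cone K ->
  0 < mA -> 0 < LA ->
  (forall u v, ip (minus (A u) (A v)) (minus u v) >= mA * (norm (minus u v))^2) ->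
  (forall u v, norm (minus (A u) (A v)) <= LA * norm (minus u v)) ->
  cont_on (time_interval T) f ->
  (forall u, cont_on (time_interval T) u -> cont_on (time_interval T) (S u)) ->
  history_dependent (time_interval T) S ->
  j_hyp K j ->
  exists u : R -> X,
    (cont_on (time_interval T) u /\ (forall t, time_interval T t -> K (u t)) /\
     forall t, time_interval T t ->
       normal_cone ip (Ct ip K j f t) (plus (A (u t)) (S u t)) (opp (u t))) /\
    (forall v : R -> X,
       (cont_on (time_interval T) v /\ (forall t, time_interval T t -> K (v t)) /\
        forall t, time_interval T t ->
          normal_cone ip (Ct ip K j f t) (plus (A (v t)) (S v t)) (opp (v t))) ->
       forall t, time_interval T t -> v t = u t).
Proof.
  move=> Hip _ HK HmA HLA A_mono A_lip Hf S_cont S_hist Hj.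
  have [sol Hsol] := stationary_solution_map ip Hip K j A mA LA HK Hj HmA HLA A_mono A_lip.
  set Phi := fun u t => sol (f t) (S u t).
  have Phi_cont : forall u, cont_on (time_interval T) u -> cont_on (time_interval T) (Phi u).
  { move=> u Hu. exact: (stationary_sol_cont_on ip Hip K j A mA HmA A_mono _ f Hf (S u) (Phi u)
      (S_cont u Hu) (fun t _ => Hsol _ _)). }
  have Phi_hist : history_dependent (time_interval T) Phi :=
    stationary_sol_history_dependent ip Hip K j A mA HmA A_mono _ f S sol S_hist Hsol.
  have [u [Hu Hfix]] := history_fixed_point T Phi Phi_cont Phi_hist.
  have u_sol : forall t, time_interval T t -> stationary_sol ip K j A (f t) (S u t) (u t).
  { move=> t It. rewrite -(Hfix t It). exact: Hsol. }
  exists u. split.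
  { split; first exact: Hu. split=> t It; by have [] := u_sol t It. }
  move=> v [Hv [Kv Nv]].
  apply: (history_fixed_point_unique T Phi Phi_hist v u Hv Hu _ Hfix) => t It.
  exact: (stationary_sol_unique ip Hip K j A mA HmA A_mono (f t) (S v t) _ _
    (Hsol _ _) (conj (Kv t It) (Nv t It))).
Qed.
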